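(* Let $b\ge 0$ be an integer and let $S$ be a nonempty subset of $\mathbb{Z}$. If $\mathbf{a}_1$ and $\mathbf{a}_2$ are two $b$-orderings of $S$, then $$\alpha_i(S,b,\mathbf{a}_1)=\alpha_i(S,b,\mathbf{a}_2)\quad\text{for all } i=0,1,2,\dots.$$
   Context: $\mathbb{N}=\{0,1,2,\dots\}$. For an integer $b\ge0$ and $a\in\mathbb{Z}$ define $\operatorname{ord}_b(a):=\sup\{k\in\mathbb{N}: a\mathbb{Z}\subseteq b^k\mathbb{Z}\}\in\mathbb{N}\cup\{+\infty\}$, with the convention $0^0=1$. Thus for $b\ge2$, $\operatorname{ord}_b(a)$ is the largest $k$ with $b^k\mid a$ and $\operatorname{ord}_b(0)=+\infty$; $\operatorname{ord}_0(a)=+\infty$ if $a=0$ and $0$ otherwise; $\operatorname{ord}_1(a)=+\infty$ for all $a$. For a nonempty $S\subseteq\mathbb{Z}$, an $S$-test sequence is any sequence $\mathbf{a}=(a_i)_{i\ge0}$ of elements of $S$ (repetitions allowed), and its $b$-exponent sequence is $\alpha_i(S,b,\mathbf{a}):=\sum_{j=0}^{i-1}\operatorname{ord}_b(a_i-a_j)$ (so $\alpha_0=0$). A $b$-ordering of $S$ is an infinite $S$-test sequence $\mathbf{a}=(a_i)_{i=0}^\infty$ such that for every $i\ge1$, $\sum_{j=0}^{i-1}\operatorname{ord}_b(a_i-a_j)=\min_{a'\in S}\sum_{j=0}^{i-1}\operatorname{ord}_b(a'-a_j)$ ($a_0\in S$ arbitrary). *)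

From mathcomp Require Import all_boot all_order all_algebra.
From Stdlib Require Import ClassicalEpsilon.
Set Implicit Arguments. Unset Strict Implicit. Unset Printing Implicit Defensive.
Import Order.TTheory GRing.Theory Num.Theory.

(* Extended naturals N ∪ {+oo}: [None] is +oo. *)
Definition enat := option nat.
Definition eadd (x y : enat) : enat :=
  match x, y with Some m, Some n => Some (m + n)%N | _, _ => None end.
Definition ele (x y : enat) : Prop :=
  match x, y with
  | _, None => True
  | None, Some _ => False
  | Some m, Some n => (m <= n)%N end.

(* divides b k a : a Z ⊆ b^k Z, i.e. b^k divides a (with 0^0 = 1). *)
Definition bdiv (b : nat) (a : int) (k : nat) : bool :=
  ((Posz (b ^ k)%N) %| a)%Z.

(* ord_b(a) = sup {k ∈ N : b^k | a} ∈ N ∪ {+oo}.  The set is nonempty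
   (k = 0) and downward closed, so when it is not all of N its supremum is
   the least k such that b^(k+1) does not divide a. *)
Definition ord (b : nat) (a : int) : enat :=
  match excluded_middle_informative (exists k, ~~ bdiv b a k.+1) with
  | left H => Some (ex_minn (ex_intro (fun k => ~~ bdiv b a k.+1) _
                     (proj2_sig (constructive_indefinite_description _ H))))
  | right _ => None
  end.

Definition esum (n : nat) (f : nat -> enat) : enat :=
  foldr (fun j acc => eadd (f j) acc) (Some 0%N) (iota 0 n).

Definition alpha (b : nat) (a : nat -> int) (i : nat) : enat :=
  esum i (fun j => ord b (a i - a j)).

Definition b_ordering (S : int -> Prop) (b : nat) (a : nat -> int) : Prop :=
  (forall i, S (a i)) /\
  (forall i, (0 < i)%N -> forall x, S x ->
     ele (alpha b a i) (esum i (fun j => ord b (x - a j)))).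

From HB Require Import structures.
From mathcomp Require Import all_boot all_order all_algebra.
From Stdlib Require Import ClassicalEpsilon.
Import GRing.Theory.
Set Implicit Arguments. Unset Strict Implicit.

(* Write d(x, y) = ord_b(x - y) and W(X) for the sum of d over the unordered
   pairs of a finite multiset X.  Since b^k Z is an additive group, d is an
   ultrametric "closeness": d(x, z) >= min(d(x, y), d(y, z)).  Given the first
   n terms A of a b-ordering and any X of size n + 1, pair greedily each a in
   A with a point of X closest to it; the ultrametric inequality then yields
   t in X with sum_(a in A) d(t, a) <= sum_(x in X, x <> t) d(t, x).  By
   induction on n the first n + 1 terms of every b-ordering of S minimise W
   among multisets of n + 1 points of S, so W(a_0, ..., a_n) is the same for
   all b-orderings, and alpha_n is its increment W(a_0..a_n) - W(a_0..a_(n-1)).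
   When this W is infinite, so is alpha_n, because alpha is nondecreasing
   from index 1 on. *)

Lemma eaddA : associative eadd.
Proof. by case=> [x|] [y|] [z|] //=; rewrite addnA. Qed.

Lemma eaddC : commutative eadd.
Proof. by case=> [x|] [y|] //=; rewrite addnC. Qed.

Lemma add0e : left_id (Some 0%N) eadd.
Proof. by case. Qed.

HB.instance Definition _ :=
  Monoid.isComLaw.Build enat (Some 0%N) eadd eaddA eaddC add0e.

Lemma eaddACA : interchange eadd eadd.
Proof. exact: Monoid.mulmACA. Qed.

Lemma eaddI n : injective (eadd (Some n)).
Proof. by case=> [x|] [y|] //= [] /addnI ->. Qed.

Lemma ele_refl x : ele x x.
Proof. by case: x => /=. Qed.

Lemma ele_trans x y z : ele x y -> ele y z -> ele x z.
Proof. by case: x => [x|]; case: y => [y|]; case: z => [z|] //=; apply: leq_trans. Qed.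

Lemma ele_total x y : ele x y \/ ele y x.
Proof. by case: x => [x|]; case: y => [y|] /=; auto; apply/orP/leq_total. Qed.

Lemma ele_anti x y : ele x y -> ele y x -> x = y.
Proof. by case: x => [x|]; case: y => [y|] //= xy yx; rewrite (@anti_leq x y) ?xy. Qed.

Lemma ele_add x x' y y' : ele x x' -> ele y y' -> ele (eadd x y) (eadd x' y').
Proof.
by case: x => [x|]; case: x' => [x'|]; case: y => [y|]; case: y' => [y'|] //=;
  apply: leq_add.
Qed.

Lemma ele_addr x y : ele x (eadd x y).
Proof. by case: x => [x|]; case: y => [y|] //=; apply: leq_addr. Qed.

Lemma ele_finite x y : (forall k, ele (Some k) x -> ele (Some k) y) -> ele x y.
Proof.
case: x => [x|] xy; first exact: (xy x (leqnn x)).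
by case: y xy => [y|] // /(_ y.+1 I); rewrite /= ltnn.
Qed.

Lemma bdiv_le b a k m : (k <= m)%N -> bdiv b a m -> bdiv b a k.
Proof. by move=> km; apply: dvdz_trans; rewrite dvdzE; apply: dvdn_exp2l. Qed.

Lemma ele_ordP b a k : ele (Some k) (ord b a) <-> bdiv b a k.
Proof.
have bdiv0 : bdiv b a 0 by rewrite /bdiv expn0 dvd1z.
rewrite /ord; case: excluded_middle_informative => [ex|all_div] /=.
  case: ex_minnP => m ndiv_m min_m; split => [km|].
    case: k km => // k km; apply/negPn/negP => /min_m; rewrite leqNgt.
    by move/negP; apply.
  move=> div_k; rewrite leqNgt; apply/negP => /bdiv_le/(_ div_k).
  by rewrite (negbTE ndiv_m).
split=> // _; case: k => // k.
by apply/negPn/negP => ndiv; apply: all_div; exists k.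
Qed.

Lemma eq_ord b a a' : bdiv b a =1 bdiv b a' -> ord b a = ord b a'.
Proof.
by move=> eq_div; apply: ele_anti; apply: ele_finite => k; rewrite !ele_ordP eq_div.
Qed.

Lemma esumE n f : esum n f = \big[eadd/Some 0%N]_(j <- iota 0 n) f j.
Proof. by rewrite unlock. Qed.

Lemma esum_le_add n k f : ele (esum n f) (esum (n + k) f).
Proof. by rewrite !esumE iotaD big_cat; apply: ele_addr. Qed.

Lemma exists_ele_max (T : eqType) (f : T -> enat) (X : seq T) : X != [::] ->
  exists2 s, s \in X & forall y, y \in X -> ele (f y) (f s).
Proof.
elim: X => [|x X IH] // _; have [->|/IH [s sX s_max]] := eqVneq X [::].
  by exists x; rewrite ?mem_head // => y /[!inE] /eqP ->; apply: ele_refl.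
have [fx_le|fs_le] := ele_total (f x) (f s).
  by exists s; rewrite ?inE ?sX ?orbT // => y /[!inE] /orP[/eqP ->|/s_max].
exists x; rewrite ?mem_head // => y /[!inE] /orP[/eqP ->|/s_max fy_le].
  exact: ele_refl.
exact: ele_trans fy_le fs_le.
Qed.

Section Ultrametric.

Variable b : nat.

Definition ord_diff (x y : int) : enat := ord b (x - y).

Lemma ord_diffC x y : ord_diff x y = ord_diff y x.
Proof. by apply: eq_ord => k; rewrite /bdiv !dvdzE -opprB abszN. Qed.

Lemma ord_diff_ultra e x y z :
  ele e (ord_diff x y) -> ele e (ord_diff y z) -> ele e (ord_diff x z).
Proof.
move=> exy eyz; apply: ele_finite => k ke.
move: (ele_trans ke exy) (ele_trans ke eyz); rewrite !ele_ordP /bdiv => kxy kyz.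
by rewrite -(subrK y x) -addrA rpredD.
Qed.

Definition ord_sum (x : int) (X : seq int) : enat :=
  \big[eadd/Some 0%N]_(y <- X) ord_diff x y.

Lemma ord_sum_cons x y X : ord_sum x (y :: X) = eadd (ord_diff x y) (ord_sum x X).
Proof. exact: big_cons. Qed.

Lemma perm_ord_sum x X Y : perm_eq X Y -> ord_sum x X = ord_sum x Y.
Proof. exact: perm_big. Qed.

Fixpoint pair_ord_sum (X : seq int) : enat :=
  if X is x :: X' then eadd (pair_ord_sum X') (ord_sum x X') else Some 0%N.

Lemma pair_ord_sum_rem t X : t \in X ->
  pair_ord_sum X = eadd (pair_ord_sum (rem t X)) (ord_sum t (rem t X)).
Proof.
elim: X => [|x X IH] //= tX; case: eqP => [-> //|/eqP xt].
have {}tX : t \in X by move: tX; rewrite inE eq_sym (negbTE xt).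
rewrite (IH tX) (perm_ord_sum x (perm_to_rem tX)) /= !ord_sum_cons ord_diffC.
by rewrite eaddACA [RHS]eaddACA [eadd (ord_sum x _) _]eaddC.
Qed.

Lemma perm_pair_ord_sum X Y : perm_eq X Y -> pair_ord_sum X = pair_ord_sum Y.
Proof.
elim: X Y => [|x X IH] Y XY; first by move: XY; rewrite perm_sym => /perm_nilP ->.
have xY : x \in Y by rewrite -(perm_mem XY) mem_head.
have XrY : perm_eq X (rem x Y).
  by rewrite -(perm_cons x) (perm_trans XY) ?perm_to_rem.
by rewrite (pair_ord_sum_rem xY) /= (IH _ XrY) (perm_ord_sum x XrY).
Qed.

Lemma exists_matching_point A X : size X = (size A).+1 ->
  exists t X', perm_eq X (t :: X') /\ ele (ord_sum t A) (ord_sum t X').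
Proof.
elim: A X => [|a A IH] X sizeX.
  case: X sizeX => [|x []] // _; exists x, [::]; split; first exact: perm_refl.
  exact: ele_refl.
have [|s sX s_max] := exists_ele_max (ord_diff a) (X := X); first by case: X sizeX.
have [|t [X' [rem_perm le_t]]] := IH (rem s X); first by rewrite size_rem // sizeX.
have tX : t \in X by apply: (mem_rem (x := s)); rewrite (perm_mem rem_perm) mem_head.
exists t, (s :: X'); split.
  apply: perm_trans (perm_to_rem sX) _.
  by rewrite perm_sym (perm_catCA [:: t] [:: s] X') /= perm_cons perm_sym.
rewrite !ord_sum_cons; apply: ele_add le_t.
apply: (@ord_diff_ultra (ord_diff t a) t a s); first exact: ele_refl.
by rewrite ord_diffC; apply: s_max.
Qed.

Lemma ord_sum_mkseq x a n :
  ord_sum x (mkseq a n) = esum n (fun j => ord_diff x (a j)).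
Proof. by rewrite /ord_sum big_map esumE. Qed.

Lemma alpha_ord_sum a n : alpha b a n = ord_sum (a n) (mkseq a n).
Proof. by rewrite ord_sum_mkseq. Qed.

Lemma pair_ord_sum_mkseqS a n :
  pair_ord_sum (mkseq a n.+1) = eadd (pair_ord_sum (mkseq a n)) (alpha b a n).
Proof.
have perm_last : perm_eq (mkseq a n.+1) (a n :: mkseq a n).
  by rewrite mkseqS perm_rcons.
by rewrite (perm_pair_ord_sum perm_last) alpha_ord_sum.
Qed.

End Ultrametric.

Section BOrdering.

Variables (b : nat) (S : int -> Prop) (a : nat -> int).
Hypothesis a_ord : b_ordering S b a.

Lemma b_ordering_mkseq_in n x : x \in mkseq a n -> S x.
Proof. by move=> /mapP[j _ ->]; apply: a_ord.1. Qed.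

Lemma b_ordering_pair_ord_sum_min n X :
  size X = n.+1 -> (forall x, x \in X -> S x) ->
  ele (pair_ord_sum b (mkseq a n.+1)) (pair_ord_sum b X).
Proof.
elim: n X => [|n IH] X sizeX XS.
  by case: X sizeX XS => [|x []] //= _ _; rewrite /ord_sum !big_nil.
have [|t [X' [XtX' le_t]]] := @exists_matching_point b (mkseq a n.+1) X.
  by rewrite size_mkseq.
have tX : t \in X by rewrite (perm_mem XtX') mem_head.
rewrite pair_ord_sum_mkseqS (perm_pair_ord_sum b XtX') /=; apply: ele_add.
  apply: IH => [|x x_X']; first by move: (perm_size XtX') => /=; rewrite sizeX => -[].
  by apply: XS; rewrite (perm_mem XtX') inE x_X' orbT.
apply: ele_trans le_t; rewrite ord_sum_mkseq.
exact: a_ord.2 n.+1 isT t (XS t tX).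
Qed.

Lemma b_ordering_alpha_mono m n : (0 < m)%N -> (m <= n)%N ->
  ele (alpha b a m) (alpha b a n).
Proof.
move=> m_gt0 /subnKC <-; apply: ele_trans (a_ord.2 m m_gt0 _ (a_ord.1 _)) _.
exact: esum_le_add.
Qed.

Lemma b_ordering_alpha_inf n :
  pair_ord_sum b (mkseq a n) = None -> alpha b a n = None.
Proof.
move=> inf; have [m lt_mn alpha_m] : exists2 m, (m < n)%N & alpha b a m = None.
  elim: n inf => [|n IH] //; rewrite pair_ord_sum_mkseqS.
  case: (pair_ord_sum _) IH => [w|] IH; last first.
    by have [m lt_mn alpha_m] := IH erefl; exists m => //; apply: ltnW.
  by case alpha_n: (alpha b a n) => // _; exists n.
have m_gt0 : (0 < m)%N by case: m alpha_m {lt_mn}.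
by move: (b_ordering_alpha_mono m_gt0 (ltnW lt_mn)); rewrite alpha_m; case: alpha.
Qed.

End BOrdering.

Theorem theorem3p3 (b : nat) (S : int -> Prop) (HS : exists s, S s)
  (a1 a2 : nat -> int) :
  b_ordering S b a1 -> b_ordering S b a2 ->
  forall i : nat, alpha b a1 i = alpha b a2 i.
Proof.
move=> ord1 ord2.
have same_pairs n : pair_ord_sum b (mkseq a1 n) = pair_ord_sum b (mkseq a2 n).
  case: n => [//|n]; apply: ele_anti.
  - apply: (b_ordering_pair_ord_sum_min ord1); first by rewrite size_mkseq.
    exact: b_ordering_mkseq_in ord2 _.
  - apply: (b_ordering_pair_ord_sum_min ord2); first by rewrite size_mkseq.
    exact: b_ordering_mkseq_in ord1 _.
move=> i; have := same_pairs i.+1; rewrite !pair_ord_sum_mkseqS same_pairs.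
case inf: (pair_ord_sum b (mkseq a2 i)) => [w|] eq_pairs; first exact: eaddI eq_pairs.
by rewrite (b_ordering_alpha_inf ord2 inf) (b_ordering_alpha_inf ord1) ?same_pairs.
Qed.
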